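(* Let $\mathbf{x}_1,\dots,\mathbf{x}_n\in\mathbb{R}^d$ and $\mathbf{w}^*\in\mathbb{R}^d$, and set $y_i=\mathbf{x}_i^\top\mathbf{w}^*$ for all $i$; let $\bar\lambda_1=\sup_i\|\mathbf{x}_i\|^2$. Let $\eta>0$, $b_0>0$, $\mathbf{w}_0\in\mathbb{R}^d$, and let $\xi_0,\xi_1,\dots\in\{1,\dots,n\}$ be any sequence of indices. Define $G_j=(\mathbf{x}_{\xi_j}^\top\mathbf{w}_j-y_{\xi_j})\mathbf{x}_{\xi_j}$ and $\mathbf{w}_{j+1}=\mathbf{w}_j-\frac{\eta}{b_{j+1}}G_j$, where either (AdaGrad-Norm) $b_{j+1}^2=b_j^2+\|G_j\|^2$, or (AdaLoss) $b_{j+1}^2=b_j^2+(\mathbf{x}_{\xi_j}^\top\mathbf{w}_j-y_{\xi_j})^2$. Suppose $J\ge1$ is the first index such that $b_J>\eta\bar\lambda_1$, and let $b_{\max}:=\sup_{l\ge0}b_{J+l}$. Then $$b_{\max}\le\eta\bar\lambda_1+\frac{\bar\lambda_1}{\eta}\|\mathbf{w}_{J-1}-\mathbf{w}^*\|^2$$ for AdaGrad-Norm, and $$b_{\max}\le\eta\bar\lambda_1+\frac{1}{\eta}\|\mathbf{w}_{J-1}-\mathbf{w}^*\|^2$$ for AdaLoss.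
   Context: This is stochastic (noiseless) linear regression with component losses $f_i(\mathbf{w})=\frac12(\mathbf{x}_i^\top\mathbf{w}-y_i)^2$, so $G_j=\nabla f_{\xi_j}(\mathbf{w}_j)$. $\|\cdot\|$ is the Euclidean norm. *)

From HB Require Import structures.
From mathcomp Require Import all_boot all_order all_algebra.
From mathcomp Require Import all_classical all_reals all_analysis.
Set Implicit Arguments. Unset Strict Implicit. Unset Printing Implicit Defensive.
Import Order.TTheory GRing.Theory Num.Theory.
Local Open Scope ring_scope.

Definition dotv (R : realType) (d : nat) (u v : 'rV[R]_d) : R :=
  \sum_(k < d) u 0 k * v 0 k.
Definition sqnorm (R : realType) (d : nat) (u : 'rV[R]_d) : R := dotv u u.

Definition lambda1 (R : realType) (n d : nat) (x : 'I_n -> 'rV[R]_d) : R :=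
  \big[Num.max/0]_(i < n) sqnorm (x i).

Definition resid (R : realType) (n d : nat) (x : 'I_n -> 'rV[R]_d)
  (y : 'I_n -> R) (i : 'I_n) (w : 'rV[R]_d) : R := dotv (x i) w - y i.
Definition grad (R : realType) (n d : nat) (x : 'I_n -> 'rV[R]_d)
  (y : 'I_n -> R) (i : 'I_n) (w : 'rV[R]_d) : 'rV[R]_d :=
  resid x y i w *: x i.

From HB Require Import structures.
From mathcomp Require Import all_boot all_order all_algebra.
From mathcomp Require Import all_classical all_reals all_analysis.
From mathcomp Require Import ring lra.
Import Order.TTheory GRing.Theory Num.Theory Order.NatMonotonyTheory.
Set Implicit Arguments. Unset Strict Implicit. Unset Printing Implicit Defensive.
Local Open Scope ring_scope.

(* Both step-size rules satisfy b_{j+1}^2 - b_j^2 <= c r_j^2, where r_j is the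
   residual (c = lambda1 for AdaGrad-Norm, c = 1 for AdaLoss).  Under this
   single hypothesis the potential b_k + (c / eta) ||w_k - w*||^2 does not
   increase once b_{k+1} > eta lambda1: the growth b_{k+1} - b_k is at most
   c r_k^2 / b_{k+1}, while the squared distance to w* drops by
   eta r_k^2 / b_{k+1} (2 - eta ||x||^2 / b_{k+1}) >= eta r_k^2 / b_{k+1}.
   So every b_{J+l} is bounded by the potential at J - 1, where
   b_{J-1} <= eta lambda1. *)

Section SquaredNorm.
Variables (R : realType) (d : nat).
Implicit Types (u v w : 'rV[R]_d) (a : R).

Lemma dotvBr u v w : dotv u (v - w) = dotv u v - dotv u w.
Proof. by rewrite /dotv -sumrB; apply: eq_bigr => k _; rewrite !mxE mulrBr. Qed.

Lemma sqnorm_ge0 u : 0 <= sqnorm u.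
Proof. by apply: sumr_ge0 => k _; rewrite -expr2 sqr_ge0. Qed.

Lemma sqnormZ a u : sqnorm (a *: u) = a ^+ 2 * sqnorm u.
Proof. by rewrite /sqnorm /dotv mulr_sumr; apply: eq_bigr => k _; rewrite !mxE; ring. Qed.

Lemma sqnormBZ a u v :
  sqnorm (u - a *: v) = sqnorm u - 2 * a * dotv v u + a ^+ 2 * sqnorm v.
Proof.
rewrite /sqnorm /dotv !mulr_sumr -sumrB -big_split /=.
by apply: eq_bigr => k _; rewrite !mxE; ring.
Qed.

End SquaredNorm.

Lemma sqnorm_le_lambda1 (R : realType) n d (x : 'I_n -> 'rV[R]_d) i :
  sqnorm (x i) <= lambda1 x.
Proof. exact: le_bigmax. Qed.

Lemma lambda1_ge0 (R : realType) n d (x : 'I_n -> 'rV[R]_d) : 0 <= lambda1 x.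
Proof. exact: bigmax_ge_id. Qed.

Section SqrtRecursion.
Variables (R : realType) (b s : nat -> R).
Hypotheses (b0_ge0 : 0 <= b 0%N) (s_ge0 : forall j, 0 <= s j).
Hypothesis bS : forall j, b j.+1 = Num.sqrt (b j ^+ 2 + s j).

Lemma sqrt_rec_ge0 j : 0 <= b j.
Proof. by case: j => [|j] //; rewrite bS sqrtr_ge0. Qed.

Lemma sqrt_rec_sqrB j : b j.+1 ^+ 2 - b j ^+ 2 = s j.
Proof. by rewrite bS sqr_sqrtr ?addr_ge0 ?sqr_ge0 // addrAC subrr add0r. Qed.

Lemma sqrt_rec_nondecreasing : {homo b : i j / (i <= j)%N >-> i <= j}.
Proof.
apply: nondecnP => j; rewrite bS -[leLHS]ger0_norm ?sqrt_rec_ge0 // -sqrtr_sqr.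
by rewrite ler_sqrt ?addr_ge0 ?sqr_ge0 // lerDl.
Qed.

End SqrtRecursion.

Lemma potential_step (R : realType) d (b b' c eta : R) (e v : 'rV[R]_d) :
  0 <= b <= b' -> 0 < eta -> 0 <= c -> eta * sqnorm v < b' ->
  b' ^+ 2 - b ^+ 2 <= c * dotv v e ^+ 2 ->
  b' + c / eta * sqnorm (e - (eta / b' * dotv v e) *: v)
    <= b + c / eta * sqnorm e.
Proof.
move=> /andP[b_ge0 bb'] eta_gt0 c_ge0 short_step sqr_gain.
have b'_gt0 : 0 < b' := le_lt_trans (mulr_ge0 (ltW eta_gt0) (sqnorm_ge0 v)) short_step.
rewrite sqnormBZ; set r := dotv v e in sqr_gain *; set g := sqnorm v in short_step *.
set E := sqnorm e.
have gain : b' - b <= c * r ^+ 2 / b'.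
  rewrite ler_pdivlMr //; have : 0 <= (b' - b) * b by rewrite mulr_ge0 ?subr_ge0.
  nra.
have descent : 0 <= c * r ^+ 2 / b' * (1 - eta * g / b').
  apply: mulr_ge0; first exact: divr_ge0 (mulr_ge0 c_ge0 (sqr_ge0 r)) (ltW b'_gt0).
  by rewrite subr_ge0 ler_pdivrMr // mul1r ltW.
suff -> : b' + c / eta * (E - 2 * (eta / b' * r) * r + (eta / b' * r) ^+ 2 * g)
  = b + c / eta * E + ((b' - b) - c * r ^+ 2 / b' - c * r ^+ 2 / b' * (1 - eta * g / b')).
  by lra.
by field; rewrite ?gt_eqF.
Qed.

Section AdaptiveStepBound.
Variables (R : realType) (n d : nat) (x : 'I_n -> 'rV[R]_d) (wstar : 'rV[R]_d).
Variables (y : 'I_n -> R) (eta c : R) (xi : nat -> 'I_n).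
Variables (w : nat -> 'rV[R]_d) (b : nat -> R) (J : nat).
Hypothesis hy : forall i, y i = dotv (x i) wstar.
Hypotheses (eta_gt0 : 0 < eta) (c_ge0 : 0 <= c).
Hypothesis b_ge0 : forall j, 0 <= b j.
Hypothesis b_nondecr : {homo b : i j / (i <= j)%N >-> i <= j}.
Hypothesis b_sqr_gain : forall j, b j.+1 ^+ 2 - b j ^+ 2 <= c * resid x y (xi j) (w j) ^+ 2.
Hypothesis wS : forall j, w j.+1 = w j - (eta / b j.+1) *: grad x y (xi j) (w j).
Hypotheses (J_gt0 : (0 < J)%N) (bJ_gt : eta * lambda1 x < b J).
Hypothesis b_le_before : forall j, (j < J)%N -> b j <= eta * lambda1 x.

Definition potential k := b k + c / eta * sqnorm (w k - wstar).

Lemma residE j : resid x y (xi j) (w j) = dotv (x (xi j)) (w j - wstar).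
Proof. by rewrite /resid hy dotvBr. Qed.

Lemma potential_nonincreasing k : (J <= k.+1)%N -> potential k.+1 <= potential k.
Proof.
move=> Jk; have step_short : eta * sqnorm (x (xi k)) < b k.+1.
  by apply: le_lt_trans (lt_le_trans bJ_gt (b_nondecr Jk)); rewrite ler_pM2l ?sqnorm_le_lambda1.
rewrite /potential; have -> : w k.+1 - wstar
    = (w k - wstar) - (eta / b k.+1 * dotv (x (xi k)) (w k - wstar)) *: x (xi k).
  by rewrite wS /grad scalerA residE addrAC.
by apply: potential_step; rewrite ?b_ge0 ?b_nondecr ?leqnSn // -residE.
Qed.

Lemma b_tail_le l : b (J + l)%N <= eta * lambda1 x + c / eta * sqnorm (w J.-1 - wstar).
Proof.
have potential_le m : potential (J.-1 + m)%N <= potential J.-1.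
  elim: m => [|m IH]; first by rewrite addn0.
  rewrite addnS; apply: le_trans IH; apply: potential_nonincreasing.
  by rewrite -addSn prednK // leq_addr.
have := potential_le l.+1; rewrite addnS -addSn prednK // /potential => tail_le.
apply: le_trans (le_trans _ tail_le) _.
  by rewrite lerDl mulr_ge0 ?sqnorm_ge0 // divr_ge0 // ltW.
by rewrite lerD2r b_le_before // prednK.
Qed.

End AdaptiveStepBound.

Lemma sqrt_rec_tail_sup_le (R : realType) (n d : nat) (x : 'I_n -> 'rV[R]_d)
    (wstar : 'rV[R]_d) (y : 'I_n -> R) (eta c : R) (xi : nat -> 'I_n)
    (w : nat -> 'rV[R]_d) (b s : nat -> R) (J : nat) :
  (forall i, y i = dotv (x i) wstar) -> 0 < eta -> 0 <= c -> 0 <= b 0%N ->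
  (forall j, 0 <= s j) -> (forall j, s j <= c * resid x y (xi j) (w j) ^+ 2) ->
  (forall j, b j.+1 = Num.sqrt (b j ^+ 2 + s j)) ->
  (forall j, w j.+1 = w j - (eta / b j.+1) *: grad x y (xi j) (w j)) ->
  (0 < J)%N -> eta * lambda1 x < b J ->
  (forall j, (j < J)%N -> b j <= eta * lambda1 x) ->
  (ereal_sup [set ((b (J + l)%N)%:E) | l in [set: nat]] <=
     (eta * lambda1 x + c / eta * sqnorm (w J.-1 - wstar))%:E)%E.
Proof.
move=> hy eta_gt0 c_ge0 b0_ge0 s_ge0 s_le bS wS J_gt0 bJ_gt b_le_before.
apply: ge_ereal_sup => _ [l _ <-]; rewrite lee_fin.
apply: (b_tail_le hy eta_gt0 c_ge0 (sqrt_rec_ge0 b0_ge0 bS)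
  (sqrt_rec_nondecreasing b0_ge0 s_ge0 bS) _ wS J_gt0 bJ_gt b_le_before) => j.
by rewrite (sqrt_rec_sqrB s_ge0 bS).
Qed.

Theorem mainTheorem6 (R : realType) (n d : nat)
  (x : 'I_n -> 'rV[R]_d) (wstar : 'rV[R]_d) (y : 'I_n -> R)
  (hy : forall i, y i = dotv (x i) wstar)
  (eta b0 : R) (heta : 0 < eta) (hb0 : 0 < b0)
  (w0 : 'rV[R]_d) (xi : nat -> 'I_n) :
  (* AdaGrad-Norm *)
  (forall (w : nat -> 'rV[R]_d) (b : nat -> R) (J : nat),
     w 0%N = w0 -> b 0%N = b0 ->
     (forall j, b j.+1 = Num.sqrt (b j ^+ 2 + sqnorm (grad x y (xi j) (w j)))) ->
     (forall j, w j.+1 = w j - (eta / b j.+1) *: grad x y (xi j) (w j)) ->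
     (1 <= J)%N -> eta * lambda1 x < b J ->
     (forall j, (j < J)%N -> b j <= eta * lambda1 x) ->
     (ereal_sup [set ((b (J + l)%N)%:E) | l in [set: nat]] <=
        (eta * lambda1 x + lambda1 x / eta * sqnorm (w J.-1 - wstar))%:E)%E)
  /\
  (* AdaLoss *)
  (forall (w : nat -> 'rV[R]_d) (b : nat -> R) (J : nat),
     w 0%N = w0 -> b 0%N = b0 ->
     (forall j, b j.+1 = Num.sqrt (b j ^+ 2 + resid x y (xi j) (w j) ^+ 2)) ->
     (forall j, w j.+1 = w j - (eta / b j.+1) *: grad x y (xi j) (w j)) ->
     (1 <= J)%N -> eta * lambda1 x < b J ->
     (forall j, (j < J)%N -> b j <= eta * lambda1 x) ->
     (ereal_sup [set ((b (J + l)%N)%:E) | l in [set: nat]] <=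
        (eta * lambda1 x + 1 / eta * sqnorm (w J.-1 - wstar))%:E)%E).
Proof.
split=> w b J _ b0E bS wS J_gt0 bJ_gt b_le_before;
  have b0_ge0 : 0 <= b 0%N by rewrite b0E ltW.
- apply: (sqrt_rec_tail_sup_le hy heta (lambda1_ge0 x) b0_ge0 _ _ bS wS J_gt0 bJ_gt b_le_before)
    => j; first exact: sqnorm_ge0.
  by rewrite /grad sqnormZ mulrC ler_wpM2r ?sqr_ge0 ?sqnorm_le_lambda1.
- apply: (sqrt_rec_tail_sup_le hy heta ler01 b0_ge0 _ _ bS wS J_gt0 bJ_gt b_le_before)
    => j; first exact: sqr_ge0.
  by rewrite mul1r.
Qed.
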